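(* Let $1<p<\infty$. The sequence space $h_p$, with norm $\|x\|_{h_p}=\big(\sum_{k=1}^\infty|k\,\Delta x_k|^p\big)^{1/p}$, has the $AD$ property, i.e. the set $\phi$ of finitely nonzero sequences is dense in $h_p$.
   Context: Sequences are complex sequences $x=(x_k)_{k\ge1}$, and $\Delta x_k=x_k-x_{k+1}$. For $1<p<\infty$, $$h_p=\Big\{x:\ \sum_{k=1}^{\infty}(k|\Delta x_k|)^p<\infty,\ \lim_k x_k=0\Big\}.$$ $\phi$ denotes the set of all sequences with only finitely many nonzero terms. *)

From Stdlib Require Import Reals.
From Coquelicot Require Import Coquelicot.
Open Scope R_scope.

(* Sequences x = (x_k)_{k>=1} are represented as x : nat -> C; the value
   x 0 is a junk entry that is never used (all indices below are k >= 1). *)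

(* a^q for a >= 0, with the convention 0^q = 0 (q > 0). *)
Definition rpow (a q : R) : R := if Rlt_dec 0 a then Rpower a q else 0.

Definition Delta (x : nat -> C) (k : nat) : C := (x k - x (S k))%C.

(* the n-th term (n >= 0) of sum_{k>=1} (k |Delta x_k|)^p, with k = n+1 *)
Definition hp_term (p : R) (x : nat -> C) (n : nat) : R :=
  rpow (INR (S n) * Cmod (Delta x (S n))) p.

Definition in_hp (p : R) (x : nat -> C) : Prop :=
  ex_series (hp_term p x) /\ is_lim_seq (fun k => Cmod (x k)) 0.

Definition hp_norm (p : R) (x : nat -> C) : R :=
  rpow (Series (hp_term p x)) (1 / p).

Definition in_phi (y : nat -> C) : Prop :=
  exists N : nat, forall k : nat, (N <= k)%nat -> y k = 0%C.

Definition seq_sub (x y : nat -> C) : nat -> C := fun k => (x k - y k)%C.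

From Pilot Require Import Defs.
From Stdlib Require Import Reals Lra Lia.
From Coquelicot Require Import Coquelicot.
Open Scope R_scope.

(* Cutting [x] off at [N] and subtracting the constant [x_N] gives the element
   [y] of phi with [(x - y)_k = x_(max k N)].  Then [Delta (x - y)] vanishes
   below [N] and agrees with [Delta x] from [N] on, so [||x - y||^p] is the
   tail [sum_(k >= N) (k |Delta x_k|)^p] of a convergent series, hence small. *)

Lemma rpow_0 (q : R) : rpow 0 q = 0.
Proof. unfold rpow; destruct (Rlt_dec 0 0); [lra | reflexivity]. Qed.

Lemma rpow_lt_Rpower_inv (s a q : R) :
  0 < a -> 0 < q -> s < Rpower a q -> rpow s (1 / q) < a.
Proof.
  intros Ha Hq Hs; unfold rpow.
  destruct (Rlt_dec 0 s) as [Hs0 | _]; [| exact Ha].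
  assert (Hroot : Rpower (Rpower a q) (1 / q) = a).
  { rewrite Rpower_mult; replace (q * (1 / q)) with 1 by (field; lra).
    apply Rpower_1, Ha. }
  rewrite <- Hroot; apply Rlt_Rpower_l; [apply Rdiv_lt_0_compat |]; lra.
Qed.

Lemma ex_series_eventually_0 (a : nat -> R) (N : nat) :
  (forall n, (N <= n)%nat -> a n = 0) -> ex_series a.
Proof.
  intros Ha; apply (ex_series_incr_n a N).
  exists 0; apply (filterlim_ext (fun _ => 0)); [| apply filterlim_const].
  intros n; rewrite (sum_n_ext _ (fun _ => 0)), sum_n_const; [ring |].
  intros k; apply Ha; lia.
Qed.

Lemma Series_prefix_0 (a : nat -> R) (M : nat) :
  (forall n, (n < M)%nat -> a n = 0) -> ex_series a ->
  Series a = Series (fun k => a (M + k)%nat).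
Proof.
  intros Ha Hex; destruct M as [| M0].
  - reflexivity.
  - rewrite (Series_incr_n a (S M0)) by (lia || exact Hex).
    assert (Hsum : forall m, (m <= M0)%nat -> sum_f_R0 a m = 0).
    { induction m as [| m IH]; intros Hm; simpl.
      - apply Ha; lia.
      - rewrite IH, Ha by lia; ring. }
    rewrite Hsum by (simpl; lia); ring.
Qed.

Lemma Series_tail_lt (a : nat -> R) (e : R) :
  ex_series a -> 0 < e -> exists M, Series (fun k => a (S M + k)%nat) < e.
Proof.
  intros Hex He.
  destruct (proj1 (is_series_Reals a (Series a)) (Series_correct a Hex) e He)
    as [M HM].
  exists M; specialize (HM M (le_n _)); unfold R_dist in HM.
  rewrite (Series_incr_n a (S M)) in HM; [| lia | exact Hex].
  apply Rabs_def2 in HM; cbn [Init.Nat.pred] in HM; lra.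
Qed.

Definition truncation (N : nat) (x : nat -> C) : nat -> C :=
  fun k => if (k <? N)%nat then (x k - x N)%C else 0%C.

Lemma in_phi_truncation (N : nat) (x : nat -> C) : in_phi (truncation N x).
Proof.
  exists N; intros k Hk; unfold truncation.
  destruct (Nat.ltb_spec k N); [lia | reflexivity].
Qed.

Lemma seq_sub_truncation (N : nat) (x : nat -> C) (k : nat) :
  seq_sub x (truncation N x) k = x (Nat.max k N).
Proof.
  unfold seq_sub, truncation.
  destruct (Nat.ltb_spec k N).
  - rewrite Nat.max_r by lia; ring.
  - rewrite Nat.max_l by lia; ring.
Qed.

Lemma Delta_seq_sub_truncation (N : nat) (x : nat -> C) (k : nat) :
  Defs.Delta (seq_sub x (truncation N x)) k =
  if (N <=? k)%nat then Defs.Delta x k else 0%C.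
Proof.
  unfold Defs.Delta; rewrite !seq_sub_truncation.
  destruct (Nat.leb_spec N k).
  - rewrite !Nat.max_l by lia; reflexivity.
  - rewrite !Nat.max_r by lia; ring.
Qed.

Lemma hp_term_sub_truncation (p : R) (x : nat -> C) (M n : nat) :
  hp_term p (seq_sub x (truncation (S M) x)) n =
  if (M <=? n)%nat then hp_term p x n else 0.
Proof.
  unfold hp_term; rewrite Delta_seq_sub_truncation.
  destruct (Nat.leb_spec (S M) (S n)), (Nat.leb_spec M n); try lia.
  - reflexivity.
  - rewrite Cmod_0, Rmult_0_r; apply rpow_0.
Qed.

Lemma hp_term_sub_truncation_prefix (p : R) (x : nat -> C) (M n : nat) :
  (n < M)%nat -> hp_term p (seq_sub x (truncation (S M) x)) n = 0.
Proof.
  intros Hn; rewrite hp_term_sub_truncation.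
  destruct (Nat.leb_spec M n); [lia | reflexivity].
Qed.

Lemma hp_term_sub_truncation_tail (p : R) (x : nat -> C) (M k : nat) :
  hp_term p (seq_sub x (truncation (S M) x)) (M + k)%nat = hp_term p x (M + k)%nat.
Proof.
  rewrite hp_term_sub_truncation.
  destruct (Nat.leb_spec M (M + k)); [reflexivity | lia].
Qed.

Lemma Series_hp_term_sub_truncation (p : R) (x : nat -> C) (M : nat) :
  ex_series (hp_term p x) ->
  Series (hp_term p (seq_sub x (truncation (S M) x))) =
  Series (fun k => hp_term p x (M + k)%nat).
Proof.
  intros Hex.
  rewrite (Series_prefix_0 _ M).
  - apply Series_ext; intros k; apply hp_term_sub_truncation_tail.
  - intros n; apply hp_term_sub_truncation_prefix.
  - apply (ex_series_incr_n _ M), (ex_series_ext (fun k => hp_term p x (M + k)%nat)).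
    + intros k; symmetry; apply hp_term_sub_truncation_tail.
    + now apply ex_series_incr_n.
Qed.

Lemma in_phi_in_hp (p : R) (y : nat -> C) : in_phi y -> in_hp p y.
Proof.
  intros [N HN]; split.
  - apply (ex_series_eventually_0 _ N); intros n Hn; unfold hp_term, Defs.Delta.
    rewrite (HN (S n)), (HN (S (S n))) by lia.
    replace (Cmod _) with 0 by (rewrite <- Cmod_0; f_equal; ring).
    rewrite Rmult_0_r; apply rpow_0.
  - apply (is_lim_seq_incr_n _ N).
    apply (is_lim_seq_ext (fun _ => 0)); [| apply is_lim_seq_const].
    intros n; rewrite (HN (n + N)%nat) by lia; now rewrite Cmod_0.
Qed.

Theorem corollary2p4 (p : R) (hp1 : 1 < p) :
  (forall y : nat -> C, in_phi y -> in_hp p y) /\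
  (forall x : nat -> C, in_hp p x ->
     forall eps : R, 0 < eps ->
       exists y : nat -> C, in_phi y /\ hp_norm p (seq_sub x y) < eps).
Proof.
  split; [intros y; apply in_phi_in_hp |].
  intros x [Hex _] eps Heps.
  destruct (Series_tail_lt _ (Rpower eps p) Hex (exp_pos _)) as [M HM].
  exists (truncation (S (S M)) x); split; [apply in_phi_truncation |].
  unfold hp_norm; rewrite Series_hp_term_sub_truncation by exact Hex.
  apply rpow_lt_Rpower_inv; lra.
Qed.
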